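(* (a) An integer $k\ge1$ is a local minimum of the sequence $(p(m))_{m\ge0}$ if and only if $k$ is a positive multiple of $4$. (b) Let $a_j=p(4j)$ for $j\ge0$ be the sequence of negligibility values at the multiples of $4$. An integer $j\ge1$ is a local minimum of $(a_j)_{j\ge0}$ if and only if $j$ is a positive multiple of $4$; that is, the minima among the negligibility minima occur exactly at the integers $16l$, $l\ge1$.
   Context: Every integer $m\ge 0$ is written in binary as $m=\sum_{k\ge1} m_k 2^{k-1}$ with $m_k\in\{0,1\}$. The negligibility is $p(m)=\sum_k (k+1)m_k$. For a real sequence $(a_m)_{m\ge0}$, an index $k\ge1$ is a local minimum if $a_{k-1}>a_k<a_{k+1}$. *)

From mathcomp Require Import all_boot.
Set Implicit Arguments. Unset Strict Implicit. Unset Printing Implicit Defensive.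

(* Binary digit m_k (k >= 1) of m: m = \sum_k m_k 2^(k-1). *)
Definition digit (m k : nat) : nat := odd (m %/ 2 ^ k.-1).

(* Negligibility p(m) = \sum_{k>=1} (k+1) m_k.  Digits m_k vanish for
   k > m (since 2^(k-1) >= k > m), so the sum over 1 <= k <= m is the full sum. *)
Definition negl (m : nat) : nat := \sum_(1 <= k < m.+1) k.+1 * digit m k.

Definition local_min (a : nat -> nat) (k : nat) : Prop :=
  1 <= k /\ a k.-1 > a k /\ a k < a k.+1.

From mathcomp Require Import all_boot.
From mathcomp Require Import zify.

(* Write s(m) for the number of ones in the binary expansion
   of m and, for a parameter c, set h_c(m) = p(m) + c * s(m).  Appending a
   binary digit b shifts every digit of u one place up, which raises each
   weight k+1 by one, so
        p(2u + b) = p(u) + s(u) + 2b,     s(2u + b) = s(u) + b,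
   i.e.  h_c(2u) = h_{c+1}(u)  and  h_c(2u+1) = h_{c+1}(u) + c + 2.
   From these two recurrences alone we get the increment bound
   h_c(r) <= h_c(r-1) + c + 2 (by strong induction on r), and then a case
   analysis on k mod 4 shows that, for every c, k >= 1 is a local minimum of
   h_c iff 4 | k.  Part (a) is the case c = 0 (h_0 = p); part (b) follows
   because p(4j) = h_2(j) by applying the first recurrence twice. *)

Lemma digit_small m k : m < k -> digit m k = 0.
Proof.
move=> ltmk; rewrite /digit divn_small //.
case: k ltmk => // k ltmk /=.
exact: leq_trans ltmk (ltn_expl k (isT : 1 < 2)).
Qed.

Lemma digit_sum_widen (w : nat -> nat) m N : m <= N ->
  \sum_(1 <= k < m.+1) w k * digit m k = \sum_(1 <= k < N.+1) w k * digit m k.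
Proof.
move=> lemN; rewrite (@big_cat_nat _ _ _ m.+1 1 N.+1) //=.
rewrite [X in _ + X]big_nat_cond [X in _ + X]big1 ?addn0 // => i.
by case/andP=> /andP[ltmi _] _; rewrite digit_small ?muln0.
Qed.

Lemma digit1 m : digit m 1 = odd m.
Proof. by rewrite /digit expn0 divn1. Qed.

Lemma digit_double u (b : bool) k : 1 <= k -> digit (2 * u + b) k.+1 = digit u k.
Proof.
case: k => // k _; rewrite /digit /= expnS divnMA mulnC divnMDl //.
by rewrite (@divn_small b 2) ?addn0 //; case: b.
Qed.

Lemma digit_sum_double (w : nat -> nat) u (b : bool) N :
  \sum_(1 <= k < N.+2) w k * digit (2 * u + b) k =
  w 1 * b + \sum_(1 <= k < N.+1) w k.+1 * digit u k.
Proof.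
rewrite big_ltn // digit1 oddD oddM /=.
congr (_ + _); first by case: b.
rewrite big_add1 /= big_nat_cond [RHS]big_nat_cond.
by apply: eq_bigr => i /andP[/andP[lei _] _]; rewrite digit_double.
Qed.

Definition popcount (m : nat) : nat := \sum_(1 <= k < m.+1) 1 * digit m k.

Definition wnegl (c m : nat) : nat := negl m + c * popcount m.

Lemma popcount_double u (b : bool) : popcount (2 * u + b) = popcount u + b.
Proof.
rewrite /popcount (@digit_sum_widen _ _ (2 * u + b).+1) // digit_sum_double.
by rewrite (@digit_sum_widen _ u (2 * u + b)) 1?addnC ?mul1n //; lia.
Qed.

Lemma negl_double u (b : bool) : negl (2 * u + b) = negl u + popcount u + 2 * b.
Proof.
rewrite /negl (@digit_sum_widen _ _ (2 * u + b).+1) // digit_sum_double.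
rewrite /popcount !(@digit_sum_widen _ u (2 * u + b)); try lia.
rewrite addnC -big_split /=; congr (_ + _).
by apply: eq_bigr => i _; rewrite -mulnDl addn1.
Qed.

Lemma wnegl_even c u : wnegl c (2 * u) = wnegl c.+1 u.
Proof.
have := negl_double u false; have := popcount_double u false.
rewrite /wnegl /= !addn0 => -> ->; lia.
Qed.

Lemma wnegl_odd c u : wnegl c (2 * u).+1 = wnegl c.+1 u + c + 2.
Proof.
have := negl_double u true; have := popcount_double u true.
rewrite /wnegl /= !addn1 => -> ->; lia.
Qed.

(* Passing from r - 1 to r increases h_c by at most c + 2: an odd r adds
   exactly c + 2, an even r reduces to r/2 with parameter c + 1. *)
Lemma wnegl_step_bound r c : 1 <= r -> wnegl c r <= wnegl c r.-1 + c + 2.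
Proof.
elim/ltn_ind: r c => r IH c r_gt0.
have r_eq := odd_double_half r; set u := r./2 in r_eq.
case: (odd r) r_eq => /= r_eq; rewrite -r_eq.
- by rewrite -mul2n ?add1n wnegl_odd /= wnegl_even.
- have u_gt0 : 1 <= u by lia.
  have := IH u ltac:(lia) c.+1 u_gt0.
  have -> : (u.*2).-1 = (2 * u.-1).+1 by lia.
  rewrite -mul2n wnegl_even wnegl_odd; lia.
Qed.

Lemma local_min_ext (a b : nat -> nat) k :
  (forall i, a i = b i) -> local_min a k <-> local_min b k.
Proof. by move=> eq_ab; rewrite /local_min !eq_ab. Qed.

(* For every c, the local minima of h_c are exactly the positive multiples of 4.
   Writing k = 4q + t, the recurrences express the neighbours of k through
   h_{c+2}(q) (and h_{c+2}(q-1) when t = 0, where the step bound is used). *)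
Lemma wnegl_local_min c k : 1 <= k -> local_min (wnegl c) k <-> 4 %| k.
Proof.
move=> k_gt0; rewrite /local_min /dvdn.
have k_eq := divn_eq k 4.
have := ltn_mod k 4.
case: (k %% 4) k_eq => [|[|[|[|t]]]] // k_eq _; set q := k %/ 4 in k_eq.
- have q_gt0 : 1 <= q by lia.
  have := @wnegl_step_bound q c.+2 q_gt0.
  have -> : k = 2 * (2 * q) by lia.
  have -> : (2 * (2 * q)).-1 = (2 * (2 * q.-1).+1).+1 by lia.
  rewrite !wnegl_even !wnegl_odd wnegl_even; split => //; lia.
- have -> : k = (2 * (2 * q)).+1 by lia.
  rewrite /= wnegl_odd !wnegl_even; split => // -[_ []]; lia.
- have -> : k = 2 * (2 * q).+1 by lia.
  have -> : (2 * (2 * q).+1).-1 = (2 * (2 * q)).+1 by lia.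
  rewrite !wnegl_even !wnegl_odd !wnegl_even; split => // -[_ []]; lia.
- have -> : k = (2 * (2 * q).+1).+1 by lia.
  rewrite /= wnegl_odd !wnegl_even wnegl_odd; split => // -[_ []]; lia.
Qed.

(* p(4j) = h_2(j): multiplying by 4 appends two zero digits. *)
Lemma negl_mul4 j : negl (4 * j) = wnegl 2 j.
Proof.
by rewrite -(wnegl_even 1) -(wnegl_even 0) mulnA /wnegl mul0n addn0.
Qed.

Theorem theorem3 :
  (forall k : nat, 1 <= k -> (local_min negl k <-> 4 %| k)) /\
  (forall j : nat, 1 <= j ->
     (local_min (fun i => negl (4 * i)) j <-> 4 %| j)).
Proof.
split => k k_gt0.
- rewrite -(@wnegl_local_min 0 k k_gt0); apply: local_min_ext => i.
  by rewrite /wnegl mul0n addn0.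
- rewrite -(@wnegl_local_min 2 k k_gt0); apply: local_min_ext => i.
  exact: negl_mul4.
Qed.
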